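(* Let $\mathcal{M}_{\mathbb{P}}=(\mathcal{M},\mathbb{P})$ be an uncertain parametric MDP and let $\mathcal{U}_N=\{u_1,\dots,u_N\}$, $N\ge 1$, be a set of parameter instantiations sampled independently from $\mathbb{P}$. Let $\varphi$ be a specification (a measure, a comparison operator and a threshold) whose threshold $\lambda^*(\mathcal{U}_N)$ is chosen, for any sample set $\mathcal{U}_N$, such that every sample satisfies it, i.e. $\mathcal{M}[u]\models\varphi$ for all $u\in\mathcal{U}_N$. Fix a confidence probability $\beta\in(0,1)$. Then \[\mathbb{P}^N\Big\{F(\mathcal{M}_{\mathbb{P}},\varphi)\ \ge\ (1-\beta)^{1/N}\Big\}\ \ge\ \beta .\]
   Context: A parametric MDP (pMDP) is $\mathcal{M}=(S,\mathit{Act},s_I,V,\mathcal{P})$ with finite state set $S$, finite action set $\mathit{Act}$, initial state $s_I$, finite parameter set $V$, and transition function $\mathcal{P}:S\times\mathit{Act}\times S\to\mathbb{Q}[V]$ (polynomials in the parameters). The parameter space $\mathcal{V}_{\mathcal{M}}$ consists of instantiations $u:V\to\mathbb{R}$; $\mathcal{M}[u]$ is the MDP obtained by evaluating every polynomial at $u$. All instantiations are assumed to give well-defined MDPs and to be graph-preserving (nonzero transitions get values in $(0,1]$). An uncertain pMDP (upMDP) is a pair $\mathcal{M}_{\mathbb{P}}=(\mathcal{M},\mathbb{P})$ with $\mathbb{P}$ a (possibly unknown) probability distribution over $\mathcal{V}_{\mathcal{M}}$. A specification $\varphi$ consists of a measure on MDPs (e.g. maximal/minimal reachability probability of a target set,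 expected reward until reaching a target), a comparison operator in $\{<,\le,\ge,>\}$ and a threshold $\lambda$; $\mathcal{M}[u]\models\varphi$ means the measure's value for $\mathcal{M}[u]$ compares to $\lambda$ as prescribed. The satisfaction probability is $F(\mathcal{M}_{\mathbb{P}},\varphi)=\int_{\mathcal{V}_{\mathcal{M}}} I_\varphi(u)\,d\mathbb{P}(u)$, where $I_\varphi(u)=1$ iff $\mathcal{M}[u]\models\varphi$ and $0$ otherwise (assumed measurable). $\mathbb{P}^N$ denotes the $N$-fold product measure governing the i.i.d. sample set $\mathcal{U}_N$. *)

From HB Require Import structures.
From mathcomp Require Import all_boot all_order all_algebra.
From mathcomp Require Import all_classical all_reals all_analysis.
Set Implicit Arguments. Unset Strict Implicit. Unset Printing Implicit Defensive.
Import Order.TTheory GRing.Theory Num.Theory.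
Local Open Scope classical_set_scope.
Local Open Scope ring_scope.

Inductive cmp_op := CLt | CLe | CGe | CGt.

(* [sat op v lam]: the measure value [v] compares to threshold [lam] as
   prescribed by [op]; i.e. M[u] |= phi iff sat op (meas M[u]) lam. *)
Definition sat {R : realType} (op : cmp_op) (v lam : R) : Prop :=
  match op with
  | CLt => v < lam
  | CLe => v <= lam
  | CGe => lam <= v
  | CGt => lam < v
  end.

Definition sat_prob {R : realType} {d} {T : measurableType d}
  (P : probability T R) {MDP : Type} (inst : T -> MDP) (meas : MDP -> R)
  (op : cmp_op) (lam : R) : \bar R :=
  P [set u | sat op (meas (inst u)) lam].

(* [PN] is the N-fold product measure P^N on N-tuples of parameter
   instantiations: it gives every measurable rectangle the product of the
   marginal probabilities (this determines P^N uniquely). *)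
Definition is_product_prob {R : realType} {d} {T : measurableType d}
  (N : nat) (P : probability T R) (PN : probability (N.-tuple T) R) : Prop :=
  forall A : 'I_N -> set T, (forall i, measurable (A i)) ->
    PN [set s | forall i, A i (tnth s i)] = (\prod_(i < N) P (A i))%E.

From HB Require Import structures.
From mathcomp Require Import all_boot all_order all_algebra.
From mathcomp Require Import all_classical all_reals all_analysis.
Import Order.TTheory GRing.Theory Num.Theory.
Local Open Scope classical_set_scope.
Local Open Scope ring_scope.

(* After a sign flip, the instantiations satisfying phi at threshold t form
   a nondecreasing family S t of measurable sets.  The members of measure
   below q := (1 - beta)^(1/N) are exhausted by a countable nondecreasing
   subfamily, so their union A is measurable with P A <= q.  If lamstar s
   gives satisfaction probability below q, then S (lamstar s) has measure
   below q and contains every sample of s, so all samples lie in A; this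
   happens with P^N-probability at most (P A)^N <= q^N = 1 - beta. *)

Section CofinalSequences.
Context {R : realType}.

Lemma cofinal_seq (C : set R) : C !=set0 ->
  exists2 t : nat -> R, (forall n, C (t n)) & forall x, C x -> exists n, x <= t n.
Proof.
move=> C0; have [ubC|unbC] := pselect (has_ubound C).
  have [Csup|Cnsup] := pselect (C (sup C)).
    by exists (fun=> sup C) => // x Cx; exists 0%N; exact: ub_le_sup.
  have /choice [t tP] n : exists e, C e /\ sup C - n.+1%:R^-1 < e.
    have [e Ce lte] : exists2 e, C e & sup C - n.+1%:R^-1 < e.
      by apply: sup_adherent => //; rewrite invr_gt0 ltr0n.
    by exists e.
  exists t => [n|x Cx]; first exact: (tP n).1.
  have lt_x_sup : x < sup C.
    by rewrite lt_neqAle ub_le_sup // andbT; apply: contraPneq Cnsup => <-.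
  have [k ltk] := ltr_add_invr lt_x_sup.
  by exists k; apply/ltW/(lt_trans _ (tP k).2); rewrite ltrBrDr.
have /choice [t tP] n : exists y, C y /\ n%:R < y.
  by move/has_ubPn: unbC => /(_ n%:R) [y Cy lty]; exists y.
exists t => [n|x Cx]; first exact: (tP n).1.
by exists (Num.truncn x).+1; apply/ltW/(lt_trans (truncnS_gt x))/(tP _).2.
Qed.

Fixpoint prefix_max (t : nat -> R) (n : nat) : R :=
  if n is n'.+1 then Num.max (prefix_max t n') (t n) else t 0%N.

Lemma nondecreasing_cofinal_seq (C : set R) : C !=set0 ->
  exists t : nat -> R, [/\ forall n, C (t n), nondecreasing_seq t &
    forall x, C x -> exists n, x <= t n].
Proof.
case/cofinal_seq => t Ct cofinal; exists (prefix_max t); split.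
- elim=> [|n IHn] //=; by case: leP.
- by apply/nondecreasing_seqP => n /=; rewrite le_max lexx.
- move=> x /cofinal [n lexn]; exists n; apply: le_trans lexn _.
  by case: n => [|n] //=; rewrite le_max lexx orbT.
Qed.

End CofinalSequences.

Lemma nondecreasing_family_cover {R : realType} {d : measure_display}
    {T : measurableType d} (mu : {measure set T -> \bar R}) (S : R -> set T)
    (q : \bar R) : (0 <= q)%E ->
  (forall t, measurable (S t)) -> {homo S : s t / s <= t >-> s `<=` t} ->
  exists2 A, measurable A &
    (mu A <= q)%E /\ forall t, (mu (S t) < q)%E -> S t `<=` A.
Proof.
move=> q0 mS homoS; set C := [set t | (mu (S t) < q)%E].
have [C0|] := pselect (C !=set0); last first.
  move=> C0; exists set0 => //; split => [|t Ct]; first by rewrite measure0.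
  by case: C0; exists t.
have [t [Ct t_nd cofinal]] := nondecreasing_cofinal_seq _ C0.
exists (\bigcup_n S (t n)); first exact: bigcupT_measurable.
split=> [|s /cofinal [n lesn]]; last first.
  by apply: subset_trans (homoS _ _ lesn) _; exact: bigcup_sup.
have St_nd : nondecreasing_seq (S \o t).
  by apply/nondecreasing_seqP => n; rewrite subsetEset; apply/homoS/t_nd.
have cvgSt := @nondecreasing_cvg_mu _ _ _ mu _ (fun n => mS (t n))
  (bigcupT_measurable _ (fun n => mS (t n))) St_nd.
rewrite -(cvg_lim _ cvgSt) //; apply: lime_le; first exact: cvgP cvgSt.
by near=> n; apply/ltW/Ct.
Unshelve. all: by end_near.
Qed.

Definition cmp_sign {R : realType} (op : cmp_op) : R :=
  match op with CLt | CLe => 1 | CGe | CGt => -1 end.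

Lemma cmp_signK {R : realType} (op : cmp_op) (t : R) :
  cmp_sign op * (cmp_sign op * t) = t.
Proof. by case: op; rewrite /cmp_sign ?mul1r ?mulN1r ?opprK. Qed.

Lemma sat_cmp_sign_mono {R : realType} (op : cmp_op) (v s t : R) : s <= t ->
  sat op v (cmp_sign op * s) -> sat op v (cmp_sign op * t).
Proof.
move=> lest; case: op; rewrite /sat /cmp_sign ?mul1r ?mulN1r => vs.
- exact: lt_le_trans lest.
- exact: le_trans lest.
- by apply: le_trans vs; rewrite lerN2.
- by apply: le_lt_trans vs; rewrite lerN2.
Qed.

Section SampleTuples.
Context {R : realType} {d : measure_display} {T : measurableType d}.

Lemma measurable_tuple_rect (N : nat) (A : set T) : measurable A ->
  measurable [set s : N.-tuple T | forall i, A (tnth s i)].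
Proof.
move=> mA; have -> : [set s : N.-tuple T | forall i, A (tnth s i)] =
    \bigcap_(i in [set: 'I_N]) ((@tnth N T)^~ i @^-1` A).
  by apply/seteqP; split => s /= sA i; [move=> _|]; exact: sA.
apply: fin_bigcap_measurable => [|i _]; first exact: finite_finset.
by rewrite -[X in measurable X]setTI; exact: measurable_tnth.
Qed.

Lemma product_prob_tuple_rect_le {N : nat} {P : probability T R}
    {PN : probability (N.-tuple T) R} {A : set T} {q : R} :
  is_product_prob P PN -> measurable A -> (P A <= q%:E)%E ->
  (PN [set s | forall i, A (tnth s i)] <= (q ^+ N)%:E)%E.
Proof.
move=> PNprod mA PAq.
have -> : PN [set s | forall i, A (tnth s i)] = (\prod_(i < N) P A)%E.
  exact: PNprod (fun=> A) (fun=> mA).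
have PAfin : P A = (fine (P A))%:E by rewrite fineK ?fin_num_measure.
have PAq' : fine (P A) <= q by rewrite -lee_fin -PAfin.
rewrite PAfin prodEFin lee_fin prodr_const card_ord lerXn2r ?nnegrE ?fine_ge0 //.
exact: le_trans (fine_ge0 (measure_ge0 P A)) PAq'.
Qed.

End SampleTuples.

Lemma probability_setC_le {R : realType} {d : measure_display}
    {T : measurableType d} (P : probability T R) (E : set T) (r : R) :
  measurable E -> (P (~` E) <= (1 - r)%:E)%E -> (r%:E <= P E)%E.
Proof.
move=> mE; rewrite probability_setC //.
have -> : P E = (fine (P E))%:E by rewrite fineK ?fin_num_measure.
by rewrite -EFinB !lee_fin lerD2l lerN2.
Qed.

Lemma powR_invn_expn {R : realType} (a : R) (n : nat) : 0 <= a -> (0 < n)%N ->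
  (a `^ n%:R^-1) ^+ n = a.
Proof.
move=> a0 n0; rewrite -powR_mulrn ?powR_ge0 // -powRrM.
by rewrite mulVf ?pnatr_eq0 -?lt0n // powRr1.
Qed.

Theorem theorem1 (R : realType) (d : measure_display) (T : measurableType d)
  (P : probability T R) (MDP : Type) (inst : T -> MDP) (meas : MDP -> R)
  (op : cmp_op)
  (Hmeas : forall lam : R, measurable [set u | sat op (meas (inst u)) lam])
  (N : nat) (HN : (0 < N)%N)
  (PN : probability (N.-tuple T) R) (HPN : is_product_prob P PN)
  (lamstar : N.-tuple T -> R)
  (Hlam : forall (s : N.-tuple T) (i : 'I_N),
      sat op (meas (inst (tnth s i))) (lamstar s))
  (beta : R) (Hbeta : 0 < beta < 1)
  (Hev : measurable [set s : N.-tuple T |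
      (((1 - beta) `^ (N%:R^-1))%:E <= sat_prob P inst meas op (lamstar s))%E]) :
  (beta%:E <= PN [set s : N.-tuple T |
      (((1 - beta) `^ (N%:R^-1))%:E <= sat_prob P inst meas op (lamstar s))%E])%E.
Proof.
set q := (1 - beta) `^ N%:R^-1; set E := [set s | _].
pose S t := [set u | sat op (meas (inst u)) (cmp_sign op * t)].
have S_homo : {homo S : s t / s <= t >-> s `<=` t}.
  by move=> s t lest u; exact: sat_cmp_sign_mono.
have [A mA [PAq coverA]] := nondecreasing_family_cover P S q%:E
  (lee_tofin (powR_ge0 _ _)) (fun t => Hmeas _) S_homo.
have notE_sub : ~` E `<=` [set s | forall i, A (tnth s i)].
  move=> s /negP; rewrite -ltNge => lt_sat i.
  apply: (coverA (cmp_sign op * lamstar s)); first by rewrite /S cmp_signK.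
  by rewrite /S /= cmp_signK.
have qN : q ^+ N = 1 - beta.
  by apply: powR_invn_expn HN; rewrite subr_ge0; case/andP: Hbeta => _ /ltW.
apply: probability_setC_le => //; rewrite -qN.
apply: le_trans (product_prob_tuple_rect_le HPN mA PAq).
by apply: le_measure; rewrite ?inE; [exact: measurableC|exact: measurable_tuple_rect|].
Qed.
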